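(* Consider the zooming algorithm on an instance of the Lipschitz MAB problem. In a clean phase, for any two distinct strategies $u,v$ that are active at some time $t$ of the phase, $L(u,v)>\tfrac14\min(\Delta(u),\Delta(v))$.
   Context: Lipschitz MAB problem on $(L,X)$ of diameter $\le1$: unknown $\mu:X\to[0,1]$ with $|\mu(x)-\mu(y)|\le L(x,y)$; playing $v$ yields an independent sample in $[0,1]$ of mean $\mu(v)$. $\mu^*=\sup_X\mu$, $\Delta(v)=\mu^*-\mu(v)$. Zooming algorithm: phases $i=1,2,\dots$ of $2^i$ rounds; within phase $i$, $n_t(v)$ = number of plays of $v$ in this phase before round $t$, $\mu_t(v)$ = their average reward ($0$ if none), $r_t(v)=\sqrt{8i/(2+n_t(v))}$, $I_t(v)=\mu_t(v)+2r_t(v)$; at phase start nothing is active; $u$ is covered at $t$ if $u\in B(v,r_t(v))$ (open ball) for some active $v$; in each round, if some strategy is uncovered one such is activated, then an active strategy of maximal index is played. Phase $i$ is clean if $|\mu_t(v)-\mu(v)|\le r_t(v)$ for every strategy $v$ played at least once in the phase and every round $t$ of the phase. *)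

From Stdlib Require Import Reals Lra Lia ClassicalEpsilon.
Open Scope R_scope.

Set Implicit Arguments.

Definition metric_diam_le1 (X : Type) (L : X -> X -> R) : Prop :=
  (forall x y, 0 <= L x y) /\
  (forall x y, L x y = 0 <-> x = y) /\
  (forall x y, L x y = L y x) /\
  (forall x y z, L x z <= L x y + L y z) /\
  (forall x y, L x y <= 1).

Definition lipschitz_payoff (X : Type) (L : X -> X -> R) (mu : X -> R) : Prop :=
  (forall x, 0 <= mu x <= 1) /\ (forall x y, Rabs (mu x - mu y) <= L x y).

Definition is_sup_mu (X : Type) (mu : X -> R) (mustar : R) : Prop :=
  is_lub (fun r => exists x, r = mu x) mustar.

Definition gapD (X : Type) (mu : X -> R) (mustar : R) (v : X) : R := mustar - mu v.

(* A run of phase i: rounds are numbered 0 .. 2^i - 1 within the phase.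
   act t   = strategy activated in round t (if any),
   play t  = strategy played in round t,
   rew t   = reward observed in round t. *)

Fixpoint nplays (X : Type) (play : nat -> X) (v : X) (t : nat) : nat :=
  match t with
  | O => O
  | S t' => (nplays play v t' +
             if excluded_middle_informative (play t' = v) then 1 else 0)%nat
  end.

Fixpoint sumrew (X : Type) (play : nat -> X) (rew : nat -> R) (v : X) (t : nat) : R :=
  match t with
  | O => 0
  | S t' => sumrew play rew v t' +
            (if excluded_middle_informative (play t' = v) then rew t' else 0)
  end.

Definition muhat (X : Type) (play : nat -> X) (rew : nat -> R) (v : X) (t : nat) : R :=
  match nplays play v t with
  | O => 0
  | n => sumrew play rew v t / INR n
  end.

Definition rad (X : Type) (i : nat) (play : nat -> X) (v : X) (t : nat) : R :=
  sqrt (8 * INR i / (2 + INR (nplays play v t))).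

Definition zindex (X : Type) (i : nat) (play : nat -> X) (rew : nat -> R) (v : X) (t : nat) : R :=
  muhat play rew v t + 2 * rad i play v t.

Definition active_before (X : Type) (act : nat -> option X) (t : nat) (v : X) : Prop :=
  exists s, (s < t)%nat /\ act s = Some v.

Definition active_at (X : Type) (act : nat -> option X) (t : nat) (v : X) : Prop :=
  exists s, (s <= t)%nat /\ act s = Some v.

Definition covered (X : Type) (L : X -> X -> R) (i : nat) (act : nat -> option X)
  (play : nat -> X) (t : nat) (u : X) : Prop :=
  exists v, active_before act t v /\ L u v < rad i play v t.

(* The run (act, play, rew) is a possible execution of phase i of the zooming
   algorithm (with arbitrary choices of the activated uncovered strategy and
   arbitrary tie-breaking), with rewards in [0,1]. *)
Definition zooming_phase_run (X : Type) (L : X -> X -> R) (i : nat)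
  (act : nat -> option X) (play : nat -> X) (rew : nat -> R) : Prop :=
  forall t, (t < 2 ^ i)%nat ->
    (match act t with
     | Some w => ~ covered L i act play t w
     | None => forall u, covered L i act play t u
     end) /\
    active_at act t (play t) /\
    (forall w, active_at act t w -> zindex i play rew w t <= zindex i play rew (play t) t) /\
    0 <= rew t <= 1.

Definition clean_phase (X : Type) (mu : X -> R) (i : nat)
  (play : nat -> X) (rew : nat -> R) : Prop :=
  forall v, (exists s, (s < 2 ^ i)%nat /\ play s = v) ->
  forall t, (t < 2 ^ i)%nat ->
    Rabs (muhat play rew v t - mu v) <= rad i play v t.

From Stdlib Require Import Reals Lra Lia Classical ClassicalEpsilon.
Open Scope R_scope.

(* Let u, v be distinct strategies active in a clean phase, say v activated
   in round sv and u in a later round su.  Since u was uncovered at su, it lies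
   outside B(v, r_su(v)), so L(u,v) >= r_su(v).  If v was never played before
   su then r_su(v) >= 2 > 1 >= L(u,v), impossible; otherwise let s be the last
   round before su in which v was played, so r_su(v) = r_(s+1)(v).  We show:
   (a) in a clean phase every index is an upper confidence bound,
       I_s(w) >= mu(w) + r_s(w), hence mu* <= I_s(play s) (every strategy is
       either covered by an active one, or all uncovered strategies are dominated
       by the freshly activated, never played one);
   (b) therefore Delta(play s) <= 3 r_s(play s) by cleanness of play s;
   (c) one more play shrinks the radius by less than 3/4: 3 r_s < 4 r_(s+1).
   Hence Delta(v) < 4 r_su(v) <= 4 L(u,v), which gives the theorem by symmetry. *)

Lemma Rabs_le_lower (a b : R) : Rabs a <= b -> - b <= a.
Proof.
  intros H. pose proof (Rle_abs (- a)) as Hn. rewrite Rabs_Ropp in Hn. lra.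
Qed.

Lemma rad_pos {X : Type} (i : nat) (play : nat -> X) (v : X) (t : nat) :
  (1 <= i)%nat -> 0 < rad i play v t.
Proof.
  intros Hi. unfold rad. apply sqrt_lt_R0.
  assert (1 <= INR i) by (apply (le_INR 1); lia).
  assert (0 <= INR (nplays play v t)) by apply pos_INR.
  apply Rdiv_lt_0_compat; lra.
Qed.

(* The radius of a strategy not yet played in the phase is at least
   sqrt(4 i) >= 2, larger than any distance or payoff. *)
Lemma rad_unplayed {X : Type} (i : nat) (play : nat -> X) (v : X) (t : nat) :
  (1 <= i)%nat -> nplays play v t = O -> 2 <= rad i play v t.
Proof.
  intros Hi H. unfold rad. rewrite H. simpl INR.
  assert (1 <= INR i) by (apply (le_INR 1); lia).
  replace (8 * INR i / (2 + 0)) with (4 * INR i) by field.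
  rewrite <- (sqrt_square 2) by lra. apply sqrt_le_1_alt. lra.
Qed.

(* Playing a strategy once shrinks its radius by a factor larger than 3/4:
   16 / (3 + n) > 9 / (2 + n) for every n >= 0. *)
Lemma rad_after_play {X : Type} (i : nat) (play : nat -> X) (s : nat) :
  (1 <= i)%nat -> 3 * rad i play (play s) s < 4 * rad i play (play s) (S s).
Proof.
  intros Hi. unfold rad. simpl nplays.
  destruct (excluded_middle_informative (play s = play s)) as [_|C];
    [|congruence].
  rewrite plus_INR. simpl INR.
  set (N := INR (nplays play (play s) s)).
  assert (0 <= N) by apply pos_INR.
  assert (1 <= INR i) by (apply (le_INR 1); lia).
  rewrite <- (sqrt_square 3) at 1 by lra.
  rewrite <- (sqrt_square 4) by lra.
  rewrite <- !sqrt_mult_alt by nra.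
  apply sqrt_lt_1_alt. split.
  - apply Rmult_le_pos; [lra|]. apply Rlt_le, Rdiv_lt_0_compat; lra.
  - assert (Hdiff : 4 * 4 * (8 * INR i / (2 + (N + 1))) - 3 * 3 * (8 * INR i / (2 + N))
                    = 8 * INR i * (5 + 7 * N) / ((2 + N) * (3 + N))) by (field; lra).
    assert (0 < 8 * INR i * (5 + 7 * N) / ((2 + N) * (3 + N)))
      by (apply Rdiv_lt_0_compat; nra).
    lra.
Qed.

Lemma last_play {X : Type} (play : nat -> X) (v : X) (t : nat) :
  (0 < nplays play v t)%nat ->
  exists s, (s < t)%nat /\ play s = v /\ nplays play v (S s) = nplays play v t.
Proof.
  induction t as [|t IH]; intros H; [simpl in H; lia|].
  simpl in H.
  destruct (excluded_middle_informative (play t = v)) as [E|E].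
  - exists t. auto.
  - rewrite Nat.add_0_r in H. destruct (IH H) as [s [Hst [Hs Hn]]].
    exists s. split; [lia|]. split; [exact Hs|]. rewrite Hn. simpl.
    destruct (excluded_middle_informative (play t = v)); [contradiction|lia].
Qed.

Lemma rad_same_count {X : Type} (i : nat) (play : nat -> X) (v : X) (s t : nat) :
  nplays play v s = nplays play v t -> rad i play v s = rad i play v t.
Proof. intros E. unfold rad. rewrite E. reflexivity. Qed.

Section CleanPhase.

Variables (X : Type) (L : X -> X -> R) (mu : X -> R) (mustar : R).
Hypothesis HL : metric_diam_le1 L.
Hypothesis Hmu : lipschitz_payoff L mu.
Hypothesis Hsup : is_sup_mu mu mustar.
Variable i : nat.
Hypothesis Hi : (1 <= i)%nat.
Variables (act : nat -> option X) (play : nat -> X) (rew : nat -> R).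
Hypothesis Hrun : zooming_phase_run L i act play rew.
Hypothesis Hclean : clean_phase mu i play rew.

Lemma played_active_before (w : X) (s t : nat) :
  (t < 2 ^ i)%nat -> (s < t)%nat -> play s = w -> active_before act t w.
Proof.
  intros Ht Hst Hs.
  destruct (Hrun s ltac:(lia)) as [_ [[s0 [Hs0 Ha]] _]].
  exists s0. rewrite Hs in Ha. split; [lia|exact Ha].
Qed.

(* A strategy activated in round t has not been played earlier in the phase:
   otherwise it would be active and hence cover itself. *)
Lemma activated_unplayed (w : X) (t : nat) :
  (t < 2 ^ i)%nat -> act t = Some w -> nplays play w t = O.
Proof.
  intros Ht Ha.
  destruct (Nat.eq_dec (nplays play w t) 0) as [E|E]; [exact E|exfalso].
  destruct (Hrun t Ht) as [Hunc _]. rewrite Ha in Hunc. apply Hunc.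
  destruct (last_play play w t ltac:(lia)) as [s [Hst [Hs _]]].
  exists w. split; [exact (played_active_before w s t Ht Hst Hs)|].
  destruct HL as [_ [Hz _]]. rewrite (proj2 (Hz w w) eq_refl).
  apply rad_pos, Hi.
Qed.

Lemma index_ucb (w : X) (s : nat) :
  (s < 2 ^ i)%nat -> mu w + rad i play w s <= zindex i play rew w s.
Proof.
  intros Hs. unfold zindex.
  destruct (Nat.eq_dec (nplays play w s) 0) as [E|E].
  - pose proof (rad_unplayed i play w s Hi E). unfold muhat. rewrite E.
    destruct Hmu as [Hm _]. specialize (Hm w). lra.
  - destruct (last_play play w s ltac:(lia)) as [s' [Hs's [Hw _]]].
    assert (Hs' : (s' < 2 ^ i)%nat) by lia.
    pose proof (Rabs_le_lower _ _ (Hclean w (ex_intro _ s' (conj Hs' Hw)) s Hs)).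
    lra.
Qed.

(* Every strategy x is dominated by the index of the strategy played in round
   s: either x lies in the ball of an active strategy, whose index exceeds
   mu(x) by the Lipschitz property, or round s activates a never-played
   strategy whose index is at least 2. *)
Lemma payoff_le_played_index (x : X) (s : nat) :
  (s < 2 ^ i)%nat -> mu x <= zindex i play rew (play s) s.
Proof.
  intros Hs. destruct (Hrun s Hs) as [Hact [_ [Hmax _]]].
  assert (Hcov : covered L i act play s x -> mu x <= zindex i play rew (play s) s).
  { intros [w [[s0 [Hs0 Hw]] Hd]].
    assert (Hs0s : (s0 <= s)%nat) by lia.
    pose proof (Hmax w (ex_intro _ s0 (conj Hs0s Hw))).
    pose proof (index_ucb w s Hs).
    destruct Hmu as [_ Hlip]. pose proof (Hlip x w).
    pose proof (Rle_abs (mu x - mu w)). lra. }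
  destruct (act s) as [w|] eqn:Ea; [|exact (Hcov (Hact x))].
  destruct (classic (covered L i act play s x)) as [C|C]; [exact (Hcov C)|].
  pose proof (rad_unplayed i play w s Hi (activated_unplayed w s Hs Ea)).
  pose proof (index_ucb w s Hs).
  pose proof (Hmax w (ex_intro _ s (conj (Nat.le_refl s) Ea))).
  destruct Hmu as [Hm _]. pose proof (Hm x). pose proof (Hm w). lra.
Qed.

Lemma sup_le_played_index (s : nat) :
  (s < 2 ^ i)%nat -> mustar <= zindex i play rew (play s) s.
Proof.
  intros Hs. destruct Hsup as [_ Hleast]. apply Hleast.
  intros r [x ->]. exact (payoff_le_played_index x s Hs).
Qed.

Lemma gap_of_played (s : nat) :
  (s < 2 ^ i)%nat -> gapD mu mustar (play s) <= 3 * rad i play (play s) s.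
Proof.
  intros Hs. unfold gapD.
  pose proof (sup_le_played_index s Hs) as Hub. unfold zindex in Hub.
  pose proof (Hclean (play s) (ex_intro _ s (conj Hs eq_refl)) s Hs).
  pose proof (Rle_abs (muhat play rew (play s) s - mu (play s))).
  lra.
Qed.

Lemma later_activation_far (u v : X) (su sv : nat) :
  (su < 2 ^ i)%nat -> (sv < su)%nat -> act su = Some u -> act sv = Some v ->
  L u v > / 4 * gapD mu mustar v.
Proof.
  intros Hsu Hlt Hu Hv.
  destruct (Hrun su Hsu) as [Hunc _]. rewrite Hu in Hunc.
  assert (Hfar : rad i play v su <= L u v).
  { apply Rnot_lt_le. intros C. apply Hunc.
    exists v. split; [exists sv; auto|exact C]. }
  destruct (Nat.eq_dec (nplays play v su) 0) as [E|E].
  - pose proof (rad_unplayed i play v su Hi E).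
    destruct HL as [_ [_ [_ [_ Hdiam]]]]. pose proof (Hdiam u v). lra.
  - destruct (last_play play v su ltac:(lia)) as [s [Hs [Hplay Hcount]]].
    pose proof (gap_of_played s ltac:(lia)).
    pose proof (rad_after_play i play s Hi).
    rewrite Hplay in *.
    rewrite (rad_same_count i play v (S s) su Hcount) in *.
    lra.
Qed.

End CleanPhase.

Theorem mainTheorem10 (X : Type) (L : X -> X -> R) (mu : X -> R) (mustar : R)
  (HL : metric_diam_le1 L) (Hmu : lipschitz_payoff L mu) (Hsup : is_sup_mu mu mustar)
  (i : nat) (Hi : (1 <= i)%nat)
  (act : nat -> option X) (play : nat -> X) (rew : nat -> R)
  (Hrun : zooming_phase_run L i act play rew)
  (Hclean : clean_phase mu i play rew) :
  forall (t : nat) (u v : X), (t < 2 ^ i)%nat ->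
    active_at act t u -> active_at act t v -> u <> v ->
    L u v > / 4 * Rmin (gapD mu mustar u) (gapD mu mustar v).
Proof.
  intros t u v Ht [su [Hsu Hu]] [sv [Hsv Hv]] Huv.
  pose proof (Rmin_l (gapD mu mustar u) (gapD mu mustar v)).
  pose proof (Rmin_r (gapD mu mustar u) (gapD mu mustar v)).
  destruct (Nat.lt_total sv su) as [Hlt|[Heq|Hlt]].
  - pose proof (later_activation_far X L mu mustar HL Hmu Hsup i Hi act play rew
      Hrun Hclean u v su sv ltac:(lia) Hlt Hu Hv).
    lra.
  - subst. rewrite Hu in Hv. injection Hv. contradiction.
  - pose proof (later_activation_far X L mu mustar HL Hmu Hsup i Hi act play rew
      Hrun Hclean v u sv su ltac:(lia) Hlt Hv Hu).
    destruct HL as [_ [_ [Hsym _]]]. rewrite (Hsym u v). lra.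
Qed.
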